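(* Let $(H,\cdot,1,\Delta,\epsilon,S,\rightharpoonup)$ be a Yetter--Drinfeld post-Hopf algebra with subadjacent Hopf algebra $H_\rightharpoonup=(H,\bullet_\rightharpoonup,1,\Delta,\epsilon,S_\rightharpoonup)$, and regard $(H,\cdot,1,\Delta,\epsilon,S)$ as a Hopf monoid in ${}^{H_\rightharpoonup}_{H_\rightharpoonup}\mathcal{YD}$ with action $\rightharpoonup$ and coaction $a\mapsto a_1\bullet_\rightharpoonup S_\rightharpoonup(a_3)\otimes a_2$. Then the identity map $\mathrm{Id}_H:H\to H_\rightharpoonup$ is a Yetter--Drinfeld relative Rota--Baxter operator on $H_\rightharpoonup$ with respect to $(H,\rightharpoonup)$. Moreover, if $g:(H,\rightharpoonup)\to(H',\rightharpoonup')$ is a morphism of Yetter--Drinfeld post-Hopf algebras, then $(g:H_\rightharpoonup\to H'_{\rightharpoonup'},\,g:H\to H')$ is a morphism of Yetter--Drinfeld relative Rota--Baxter operators from $\mathrm{Id}_H$ to $\mathrm{Id}_{H'}$. This yields a functor $L:\mathcal{YD}\mathrm{PH}(\mathrm{Vec}_\Bbbk)\to\mathcal{YD}\mathrm{rRB}(\mathrm{Vec}_\Bbbk)$.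
   Context: Conventions: $\Bbbk$ is a field; algebras are associative unital, coalgebras coassociative counital; Sweedler notation $\Delta(c)=c_1\otimes c_2$ (summation omitted), iterated as $c_1\otimes c_2\otimes c_3$ etc.; $H\otimes H$ carries the tensor product coalgebra structure. Definition (Yetter--Drinfeld post-Hopf algebra). A tuple $(H,\cdot,1,\Delta,\epsilon,S,\rightharpoonup)$ where $(H,\cdot,1)$ is an algebra, $(H,\Delta,\epsilon)$ is a coalgebra on the same vector space, $S:H\to H$ is linear with $x_1\cdot S(x_2)=S(x_1)\cdot x_2=\epsilon(x)1$ for all $x$, and $\rightharpoonup:H\otimes H\to H$ is a coalgebra morphism, such that for all $x,y,z\in H$: (P1) $x\rightharpoonup(y\cdot z)=(x_1\rightharpoonup y)\cdot(x_2\rightharpoonup z)$; (P2) $x\rightharpoonup(y\rightharpoonup z)=\big(x_1\cdot(x_2\rightharpoonup y)\big)\rightharpoonup z$; (P3) the map $\alpha_\rightharpoonup:H\to\mathrm{End}(H)$, $\alpha_\rightharpoonup(x)(y)=x\rightharpoonup y$, is convolution invertible, i.e. there is $\beta_\rightharpoonup:H\to\mathrm{End}(H)$ with $\alpha_\rightharpoonup(x_1)\circ\beta_\rightharpoonup(x_2)=\beta_\rightharpoonup(x_1)\circ\alpha_\rightharpoonup(x_2)=\epsilon(x)\mathrm{Id}_H$; (P4) $\epsilon(a\cdot b)=\epsilon(a)\epsilon(b)$, $\epsilon(1)=1_\Bbbk$, $\Delta(1)=1\otimes 1$; (P5) $\Delta(x\cdot y)=\Big(x_1\cdot\alpha_\rightharpoonup(x_2)\big(\beta_\rightharpoonup(x_4)(y_1)\big)\Big)\otimes(x_3\cdot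 y_2)$; (P6) setting $x\bullet_\rightharpoonup y:=x_1\cdot(x_2\rightharpoonup y)$, $S_\rightharpoonup(x):=\beta_\rightharpoonup(x_1)(S(x_2))$ and $x\leftharpoonup y:=\big(S_\rightharpoonup(x_1\rightharpoonup y_1)\bullet_\rightharpoonup x_2\big)\bullet_\rightharpoonup y_2$, one has $\Delta(S_\rightharpoonup(x))=S_\rightharpoonup(x_2)\otimes S_\rightharpoonup(x_1)$ and $(x_1\rightharpoonup y_1)\otimes(x_2\leftharpoonup y_2)=(x_2\rightharpoonup y_2)\otimes(x_1\leftharpoonup y_1)$. A morphism of Yetter--Drinfeld post-Hopf algebras $(H,\rightharpoonup)\to(H',\rightharpoonup')$ is an algebra and coalgebra morphism $g$ with $g(x\rightharpoonup y)=g(x)\rightharpoonup' g(y)$; these form $\mathcal{YD}\mathrm{PH}(\mathrm{Vec}_\Bbbk)$. Facts: $H_\rightharpoonup$ is a Hopf algebra and, with the stated action and coaction, $(H,\cdot,1,\Delta,\epsilon,S)$ is a Hopf monoid in ${}^{H_\rightharpoonup}_{H_\rightharpoonup}\mathcal{YD}$. Yetter--Drinfeld modules: for a Hopf algebra $A$ with antipode $T$, a left-left Yetter--Drinfeld module is a left $A$-module $(V,\triangleright)$ and left $A$-comodule $\rho(v)=v_{-1}\otimes v_0$ with $\rho(a\triangleright v)=a_1v_{-1}T(a_3)\otimes a_2\triangleright v_0$; these form the braided monoidal category ${}^A_A\mathcal{YD}$ with braiding $\sigma(v\otimes w)=v_{-1}\triangleright w\otimes v_0$. A bimonoid in ${}^A_A\mathcal{YD}$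 is an object with algebra and coalgebra structure maps in ${}^A_A\mathcal{YD}$, $\epsilon$ multiplicative, $\epsilon(1)=1$, $\Delta(1)=1\otimes1$, and $\Delta\circ m=(m\otimes m)(\mathrm{Id}\otimes\sigma\otimes\mathrm{Id})(\Delta\otimes\Delta)$; a Hopf monoid is a bimonoid with antipode. Definition (Yetter--Drinfeld relative (pre-)Rota--Baxter operator). Let $(H,\cdot,1,\Delta,\epsilon,S_H)$ be a Hopf algebra and $(K,\cdot_K,1_K,\Delta,\epsilon)$ a bimonoid in ${}^H_H\mathcal{YD}$ with $H$-action $\rightharpoonup$. A coalgebra morphism $R:K\to H$ is a Yetter--Drinfeld relative pre-Rota--Baxter operator if for all $a,b\in K$: (RB1) $R(a)\cdot R(b)=R\big(a_1\cdot_K(R(a_2)\rightharpoonup b)\big)$; (RB2) $S_HR(R(a_1)\rightharpoonup b_1)\cdot R(a_2)\cdot R(b_2)\otimes R(R(a_3)\rightharpoonup b_3)=S_HR(R(a_2)\rightharpoonup b_2)\cdot R(a_3)\cdot R(b_3)\otimes R(R(a_1)\rightharpoonup b_1)$. It is a Yetter--Drinfeld relative Rota--Baxter operator if moreover $R$ is bijective and (RB3) $\big(a_1\rightharpoonup R^{-1}S_H(a_2)\big)\cdot_K R^{-1}(a_3)=\epsilon(a)1_K$ for all $a\in H$. A morphism from $R:K\to H$ to $R':K'\to H'$ is a pair $(f:H\to H',g:K\to K')$ of algebra and coalgebra morphisms with $fR=R'g$ and $g(h\rightharpoonup k)=f(h)\rightharpoonup' g(k)$. $\mathcal{YD}\mathrm{rRB}(\mathrm{Vec}_\Bbbk)$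 denotes the category of Yetter--Drinfeld relative Rota--Baxter operators. *)

(* Hopf-algebraic structures on a K-vector space encoded
   with finite Sweedler sums: an element of H (x) H is a finite list of
   pairs, and equalities in tensor powers of H are tested against all
   multilinear scalar forms (which separate points of tensor products over
   a field). *)
From HB Require Import structures.
From mathcomp Require Import all_boot all_order all_algebra.
Set Implicit Arguments. Unset Strict Implicit. Unset Printing Implicit Defensive.
Import GRing.Theory.
Local Open Scope ring_scope.

Section HopfDefs.
Variable K : fieldType.

Definition sw (H : Type) (V : zmodType) (t : seq (H * H)) (f : H -> H -> V) : V :=
  \sum_(p <- t) f p.1 p.2.

(* x_1 (x) x_2 (x) x_3 := (D (x) id) D x *)
Definition sw3 (H : Type) (V : zmodType) (D : H -> seq (H * H)) (x : H)
  (f : H -> H -> H -> V) : V :=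
  sw (D x) (fun a b => sw (D a) (fun c d => f c d b)).

(* x_1 (x) x_2 (x) x_3 (x) x_4 := (D (x) id (x) id)(D (x) id) D x *)
Definition sw4 (H : Type) (V : zmodType) (D : H -> seq (H * H)) (x : H)
  (f : H -> H -> H -> H -> V) : V :=
  sw3 D x (fun a b c => sw (D a) (fun d e => f d e b c)).

Definition lin (V W : lmodType K) (f : V -> W) : Prop :=
  forall (a : K) x y, f (a *: x + y) = a *: f x + f y.
Definition flin (V : lmodType K) (f : V -> K) : Prop :=
  forall (a : K) x y, f (a *: x + y) = a * f x + f y.
Definition bilin (U V W : lmodType K) (f : U -> V -> W) : Prop :=
  (forall y, lin (fun x => f x y)) /\ (forall x, lin (f x)).
Definition form2 (H : lmodType K) (phi : H -> H -> K) : Prop :=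
  (forall y, flin (fun x => phi x y)) /\ (forall x, flin (phi x)).
Definition form3 (H : lmodType K) (phi : H -> H -> H -> K) : Prop :=
  (forall y z, flin (fun x => phi x y z)) /\ (forall x z, flin (fun y => phi x y z))
  /\ (forall x y, flin (phi x y)).

Section OneSpace.
Variable H : lmodType K.
Implicit Types (m : H -> H -> H) (u : H) (D : H -> seq (H * H)) (e : H -> K).

Definition is_algebra m u : Prop :=
  [/\ bilin m, (forall x y z, m x (m y z) = m (m x y) z),
      (forall x, m u x = x) & (forall x, m x u = x)].

Definition is_coalgebra D e : Prop :=
  [/\ (forall phi, form2 phi -> forall (a : K) x y,
          sw (D (a *: x + y)) phi = a * sw (D x) phi + sw (D y) phi),
      flin e,
      (forall phi, form3 phi -> forall x,
          sw3 D x phi = sw (D x) (fun a b => sw (D b) (fun c d => phi a c d))),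
      (forall x, sw (D x) (fun a b => e a *: b) = x) &
      (forall x, sw (D x) (fun a b => e b *: a) = x)].

Definition is_antipode m u D e (S : H -> H) : Prop :=
  [/\ lin S, (forall x, sw (D x) (fun a b => m a (S b)) = e x *: u) &
             (forall x, sw (D x) (fun a b => m (S a) b) = e x *: u)].

(* the linear map H (x) H -> H, x (x) y |-> arr x y, is a coalgebra morphism
   (checked on the spanning simple tensors) *)
Definition coalg_bimorph D e (arr : H -> H -> H) : Prop :=
  [/\ bilin arr,
      (forall phi, form2 phi -> forall x y,
         sw (D (arr x y)) phi =
         sw (D x) (fun x1 x2 => sw (D y) (fun y1 y2 => phi (arr x1 y1) (arr x2 y2)))) &
      (forall x y, e (arr x y) = e x * e y)].

(* beta x y = beta_(x)(y); beta : H -> End(H) convolution inverse of alpha *)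
Definition conv_inv D e (arr beta : H -> H -> H) : Prop :=
  [/\ bilin beta,
      (forall x y, sw (D x) (fun a b => arr a (beta b y)) = e x *: y) &
      (forall x y, sw (D x) (fun a b => beta a (arr b y)) = e x *: y)].

Definition bullet m D (arr : H -> H -> H) (x y : H) : H :=
  sw (D x) (fun a b => m a (arr b y)).
Definition Sarr D (S : H -> H) (beta : H -> H -> H) (x : H) : H :=
  sw (D x) (fun a b => beta a (S b)).
Definition lar m D S (arr beta : H -> H -> H) (x y : H) : H :=
  sw (D x) (fun x1 x2 => sw (D y) (fun y1 y2 =>
    bullet m D arr (bullet m D arr (Sarr D S beta (arr x1 y1)) x2) y2)).

Definition is_ydph m u D e (S : H -> H) (arr beta : H -> H -> H) : Prop :=
  is_algebra m u /\ is_coalgebra D e /\ is_antipode m u D e S /\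
  coalg_bimorph D e arr /\
      (forall x y z, arr x (m y z) = sw (D x) (fun x1 x2 => m (arr x1 y) (arr x2 z))) /\
      (forall x y z, arr x (arr y z) = arr (sw (D x) (fun x1 x2 => m x1 (arr x2 y))) z) /\
      conv_inv D e arr beta /\
      [/\ (forall a b, e (m a b) = e a * e b), e u = 1 &
          (forall phi, form2 phi -> sw (D u) phi = phi u u)] /\
      (forall phi, form2 phi -> forall x y,
         sw (D (m x y)) phi =
         sw4 D x (fun x1 x2 x3 x4 => sw (D y) (fun y1 y2 =>
           phi (m x1 (arr x2 (beta x4 y1))) (m x3 y2)))) /\
      ((forall phi, form2 phi -> forall x,
          sw (D (Sarr D S beta x)) phi =
          sw (D x) (fun x1 x2 => phi (Sarr D S beta x2) (Sarr D S beta x1))) /\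
       (forall phi, form2 phi -> forall x y,
          sw (D x) (fun x1 x2 => sw (D y) (fun y1 y2 =>
             phi (arr x1 y1) (lar m D S arr beta x2 y2))) =
          sw (D x) (fun x1 x2 => sw (D y) (fun y1 y2 =>
             phi (arr x2 y2) (lar m D S arr beta x1 y1))))).

End OneSpace.

Section Morphisms.
Variables H H' : lmodType K.

Definition is_alg_morph (m : H -> H -> H) (u : H) (m' : H' -> H' -> H') (u' : H')
  (f : H -> H') : Prop :=
  [/\ lin f, (forall x y, f (m x y) = m' (f x) (f y)) & f u = u'].

Definition is_coalg_morph (D : H -> seq (H * H)) (e : H -> K)
  (D' : H' -> seq (H' * H')) (e' : H' -> K) (f : H -> H') : Prop :=
  [/\ lin f,
      (forall phi, form2 phi -> forall x,
         sw (D' (f x)) phi = sw (D x) (fun x1 x2 => phi (f x1) (f x2))) &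
      (forall x, e' (f x) = e x)].
End Morphisms.

(* Yetter--Drinfeld relative Rota--Baxter operator R : A -> H, where
   H = (H, mH, uH, DH, eH, SH) is the Hopf algebra and
   A = (A, mA, uA, DA, eA) with H-action act is the bimonoid in YD. *)
Definition is_ydrrb (H A : lmodType K)
  (mH : H -> H -> H) (uH : H) (DH : H -> seq (H * H)) (eH : H -> K) (SH : H -> H)
  (mA : A -> A -> A) (uA : A) (DA : A -> seq (A * A)) (eA : A -> K)
  (act : H -> A -> A) (R : A -> H) : Prop :=
  [/\ is_coalg_morph DA eA DH eH R,
      (forall a b, mH (R a) (R b) = R (sw (DA a) (fun a1 a2 => mA a1 (act (R a2) b)))),
      (forall phi, form2 phi -> forall a b,
         sw3 DA a (fun a1 a2 a3 => sw3 DA b (fun b1 b2 b3 =>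
           phi (mH (mH (SH (R (act (R a1) b1))) (R a2)) (R b2)) (R (act (R a3) b3)))) =
         sw3 DA a (fun a1 a2 a3 => sw3 DA b (fun b1 b2 b3 =>
           phi (mH (mH (SH (R (act (R a2) b2))) (R a3)) (R b3)) (R (act (R a1) b1))))) &
      exists2 Rinv : H -> A, cancel R Rinv /\ cancel Rinv R &
        forall a : H, sw3 DH a (fun a1 a2 a3 => mA (act a1 (Rinv (SH a2))) (Rinv a3))
                      = eH a *: uA].

Definition is_ydrrb_morph (H A H' A' : lmodType K)
  (mH : H -> H -> H) (uH : H) (DH : H -> seq (H * H)) (eH : H -> K)
  (mA : A -> A -> A) (uA : A) (DA : A -> seq (A * A)) (eA : A -> K)
  (act : H -> A -> A) (R : A -> H)
  (mH' : H' -> H' -> H') (uH' : H') (DH' : H' -> seq (H' * H')) (eH' : H' -> K)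
  (mA' : A' -> A' -> A') (uA' : A') (DA' : A' -> seq (A' * A')) (eA' : A' -> K)
  (act' : H' -> A' -> A') (R' : A' -> H')
  (f : H -> H') (g : A -> A') : Prop :=
  [/\ is_alg_morph mH uH mH' uH' f /\ is_coalg_morph DH eH DH' eH' f,
      is_alg_morph mA uA mA' uA' g, is_coalg_morph DA eA DA' eA' g,
      (forall a, f (R a) = R' (g a)) &
      (forall h k, g (act h k) = act' (f h) (g k))].

(* Bundled Yetter--Drinfeld post-Hopf algebra; ybeta is the (unique)
   convolution inverse beta_-> of alpha_-> from (P3). *)
Unset Implicit Arguments.
Record ydph := YDPH {
  ycar : lmodType K;
  ymul : ycar -> ycar -> ycar;
  yone : ycar;
  ycop : ycar -> seq (ycar * ycar);
  ycounit : ycar -> K;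
  yS : ycar -> ycar;
  yarr : ycar -> ycar -> ycar;
  ybeta : ycar -> ycar -> ycar;
  yaxioms : is_ydph ymul yone ycop ycounit yS yarr ybeta }.
Set Implicit Arguments.

Definition sub_mul (X : ydph) : ycar X -> ycar X -> ycar X := bullet (ymul X) (ycop X) (yarr X).
Definition sub_S (X : ydph) : ycar X -> ycar X := Sarr (ycop X) (yS X) (ybeta X).

Definition is_ydph_morph (X Y : ydph) (g : ycar X -> ycar Y) : Prop :=
  [/\ is_alg_morph (ymul X) (yone X) (ymul Y) (yone Y) g,
      is_coalg_morph (ycop X) (ycounit X) (ycop Y) (ycounit Y) g &
      (forall x y, g (yarr X x y) = yarr Y (g x) (g y))].

End HopfDefs.

Arguments ycar {K} X : rename.
Arguments ymul {K} X _ _ : rename.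
Arguments yone {K} X : rename.
Arguments ycop {K} X _ : rename.
Arguments ycounit {K} X _ : rename.
Arguments yS {K} X _ : rename.
Arguments yarr {K} X _ _ : rename.
Arguments ybeta {K} X _ _ : rename.
Arguments sub_mul {K} X _ _ : rename.
Arguments sub_S {K} X _ : rename.
Arguments is_ydph_morph {K} X Y g : rename.

(* With R = Id, axiom (RB1) is the definition of the subadjacent product
   x bullet y = x_1 (x_2 -> y).  (RB3) reduces to the antipode axiom
   S(a_1) a_2 = e(a) 1, because x_1 -> S_->(x_2) = S(x) (beta is the
   convolution inverse of alpha).  (RB2) is the second half of (P6) once
   x <- y is expanded and both sides are regrouped by coassociativity.
   A morphism g of post-Hopf algebras preserves ., -> and the coproduct,
   hence the subadjacent product.
   Identities in tensor powers are tested against multilinear scalar forms,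
   so transferring them to vector-valued maps uses that linear forms
   separate points; this is where Zorn's lemma enters. *)

From mathcomp Require Import all_boot all_order all_algebra.
From mathcomp Require Import boolp classical_sets.

Set Implicit Arguments. Unset Strict Implicit. Unset Printing Implicit Defensive.
Import GRing.Theory.
Local Open Scope ring_scope.

Section FlinSeparation.
Variables (K : fieldType) (H : lmodType K).
Local Open Scope classical_set_scope.

Definition subspace_avoiding (v : H) (W : set H) : Prop :=
  (forall (a : K) x y, W x -> W y -> W (a *: x + y)) /\ ~ W v.

Lemma maximal_subspace_avoiding (v : H) :
  exists A, subspace_avoiding v A /\ forall B, A `<` B -> ~ subspace_avoiding v B.
Proof.
apply: Zorn_bigcup => F FP Ftot; split; last by move=> [X FX Xv]; apply: (FP _ FX).2.
move=> a x y [X FX Xx] [Y FY Yy].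
have [XY|YX] := Ftot _ _ FX FY.
  by exists Y => //; apply: (FP _ FY).1 => //; apply: XY.
by exists X => //; apply: (FP _ FX).1 => //; apply: YX.
Qed.

Section MaximalSubspace.
Variables (v : H) (A : set H).
Hypothesis v_neq0 : v != 0.
Hypothesis A_closed : forall (a : K) x y, A x -> A y -> A (a *: x + y).
Hypothesis A_notv : ~ A v.
Hypothesis A_max : forall B, A `<` B -> ~ subspace_avoiding v B.

Let A0 : A 0.
Proof.
apply: contrapT => nA0; apply: (A_max (B := [set 0])).
  split=> [w Aw|]; last by move=> /(_ 0 erefl).
  by have := A_closed (-1) Aw Aw; rewrite scaleN1r addNr.
split=> [a x y -> ->|v0]; first by rewrite scaler0 addr0.
by move: v_neq0; rewrite v0 eqxx.
Qed.

Let A_scale (a : K) x : A x -> A (a *: x).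
Proof. by move=> Ax; have := A_closed a Ax A0; rewrite addr0. Qed.

Let A_sub x y : A x -> A y -> A (x - y).
Proof. by move=> Ax Ay; have := A_closed (-1) Ay Ax; rewrite scaleN1r addrC. Qed.

(* Maximality: otherwise adjoining x to A would still avoid v. *)
Lemma maximal_subspace_codim1 x : exists c : K, A (x - c *: v).
Proof.
have [Ax|nAx] := pselect (A x); first by exists 0; rewrite scale0r subr0.
pose B := [set z | exists w (c : K), A w /\ z = w + c *: x].
apply: contrapT => nex; apply: (A_max (B := B)).
  split=> [w Aw|/(_ x) BA]; first by exists w, 0; rewrite scale0r addr0.
  by apply: nAx; apply: BA; exists 0, 1; rewrite scale1r add0r.
split=> [a z1 z2 [w1 [c1 [Aw1 ->]]] [w2 [c2 [Aw2 ->]]]|[w [c [Aw vE]]]].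
  exists (a *: w1 + w2), (a * c1 + c2); split; first exact: A_closed.
  by rewrite scalerDr scalerDl scalerA addrACA.
have c0 : c != 0 by apply: contra_notN A_notv => /eqP c0; rewrite vE c0 scale0r addr0.
apply: nex; exists c^-1.
have -> : x - c^-1 *: v = (- c^-1) *: w.
  by rewrite vE scalerDr scalerA mulVf // scale1r scaleNr opprD addrCA subrr addr0.
exact: A_scale.
Qed.

Lemma maximal_subspace_coord_uniq x (c d : K) :
  A (x - c *: v) -> A (x - d *: v) -> c = d.
Proof.
move=> Ac Ad; apply: contrapT => /eqP cd; apply: A_notv.
have := A_scale (c - d)^-1 (A_sub Ad Ac).
have -> : x - d *: v - (x - c *: v) = (c - d) *: v.
  by rewrite scalerBl opprB addrC addrA subrK.
by rewrite scalerA mulVf ?scale1r // subr_eq0.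
Qed.

End MaximalSubspace.

Lemma exists_flin_eq1 (v : H) : v != 0 -> exists F : H -> K, flin F /\ F v = 1.
Proof.
move=> v_neq0; have [A [[A_closed A_notv] A_max]] := maximal_subspace_avoiding v.
have coord := maximal_subspace_codim1 v_neq0 A_closed A_notv A_max.
have uniq := maximal_subspace_coord_uniq v_neq0 A_closed A_notv A_max.
exists (fun x => projT1 (cid (coord x))); split=> [a x y|].
  case: (cid (coord (a *: x + y))) => c Hc /=.
  case: (cid (coord x)) => cx Hx /=; case: (cid (coord y)) => cy Hy /=.
  apply: (uniq (a *: x + y)) => //; have := A_closed a _ _ Hx Hy.
  by congr A; rewrite scalerDl scalerBr scalerA opprD addrACA.
case: (cid (coord v)) => c Hc /=.
apply: (uniq v) => //; rewrite scale1r subrr.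
by have := A_closed (-1) _ _ Hc Hc; rewrite scaleN1r addNr.
Qed.

Lemma flin_separate (x y : H) : (forall F : H -> K, flin F -> F x = F y) -> x = y.
Proof.
move=> eqF; apply/eqP; rewrite -subr_eq0; apply: contraTT isT => nz.
have [F [lF F1]] := exists_flin_eq1 nz.
have : F (x - y) = 0.
  by rewrite -scaleN1r addrC lF mulN1r (eqF F lF) addNr.
by rewrite F1 => /eqP; rewrite oner_eq0.
Qed.

End FlinSeparation.

Section SweedlerLinearity.
Variable K : fieldType.

Lemma lin0 (V W : lmodType K) (f : V -> W) : lin f -> f 0 = 0.
Proof.
move=> lf; have := lf 1 0 0; rewrite !scale1r addr0 => /(congr1 (fun z => z - f 0)).
by rewrite subrr addrK => <-.
Qed.

Lemma linD (V W : lmodType K) (f : V -> W) : lin f -> forall x y, f (x + y) = f x + f y.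
Proof. by move=> lf x y; have := lf 1 x y; rewrite !scale1r. Qed.

Lemma linZ (V W : lmodType K) (f : V -> W) : lin f -> forall a x, f (a *: x) = a *: f x.
Proof. by move=> lf a x; have := lf a x 0; rewrite !addr0 lin0 // addr0. Qed.

Lemma lin_comp (U V W : lmodType K) (f : V -> W) (g : U -> V) :
  lin f -> lin g -> lin (fun x => f (g x)).
Proof. by move=> lf lg a x y; rewrite lg lf. Qed.

(* [flin f] is [lin f] for [f : V -> K^o], which gives the scalar variants. *)
Lemma flin_comp (U V : lmodType K) (f : V -> K) (g : U -> V) :
  flin f -> lin g -> flin (fun x => f (g x)).
Proof. exact: (@lin_comp U V K^o). Qed.

Lemma eq_sw (T : Type) (V : zmodType) (t : seq (T * T)) (f g : T -> T -> V) :
  (forall a b, f a b = g a b) -> sw t f = sw t g.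
Proof. by move=> fg; apply: eq_bigr => p _; apply: fg. Qed.

Lemma exchange_sw (T : Type) (V : zmodType) (t1 t2 : seq (T * T))
    (f : T -> T -> T -> T -> V) :
  sw t1 (fun a b => sw t2 (fun c d => f a b c d)) =
  sw t2 (fun c d => sw t1 (fun a b => f a b c d)).
Proof. exact: exchange_big. Qed.

Lemma lin_sw (V W : lmodType K) (F : V -> W) (T : Type) (t : seq (T * T)) g :
  lin F -> F (sw t g) = sw t (fun a b => F (g a b)).
Proof.
move=> lF; rewrite /sw; elim: t => [|p t IH]; first by rewrite !big_nil lin0.
by rewrite !big_cons linD // IH.
Qed.

Lemma flin_sw (V : lmodType K) (F : V -> K) (T : Type) (t : seq (T * T)) g :
  flin F -> F (sw t g) = sw t (fun a b => F (g a b)).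
Proof. exact: (@lin_sw V K^o). Qed.

Lemma lin_sw_body (V W : lmodType K) (T : Type) (t : seq (T * T))
    (G : V -> T -> T -> W) :
  (forall a b, lin (fun x => G x a b)) -> lin (fun x => sw t (G x)).
Proof.
move=> lG c x y; rewrite /sw; elim: t => [|p t IH].
  by rewrite !big_nil scaler0 addr0.
by rewrite !big_cons IH lG scalerDr addrACA.
Qed.

Lemma flin_sw_body (V : lmodType K) (T : Type) (t : seq (T * T))
    (G : V -> T -> T -> K) :
  (forall a b, flin (fun x => G x a b)) -> flin (fun x => sw t (G x)).
Proof. exact: (@lin_sw_body V K^o). Qed.

End SweedlerLinearity.

Definition trilin (K : fieldType) (U V W Z : lmodType K) (f : U -> V -> W -> Z) : Prop :=
  [/\ (forall y z, lin (fun x => f x y z)), (forall x z, lin (fun y => f x y z))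
    & (forall x y, lin (f x y))].

Section Coalgebra.
Variables (K : fieldType) (H : lmodType K) (D : H -> seq (H * H)) (e : H -> K).
Hypothesis Hco : is_coalgebra D e.

Lemma lin_sw_coprod (W : lmodType K) (f : H -> H -> W) :
  bilin f -> lin (fun x => sw (D x) f).
Proof.
case: Hco => Dlin _ _ _ _ [f1 f2] a x y; apply: flin_separate => F lF.
rewrite lF !(flin_sw _ _ lF) Dlin //.
by split=> z; [exact: flin_comp (f1 z) | exact: flin_comp (f2 z)].
Qed.

Lemma sw3_coassoc (W : lmodType K) (f : H -> H -> H -> W) x : trilin f ->
  sw3 D x f = sw (D x) (fun a b => sw (D b) (fun c d => f a c d)).
Proof.
case: Hco => _ _ coass _ _ [f1 f2 f3]; apply: flin_separate => F lF.
rewrite /sw3 !(flin_sw _ _ lF).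
under eq_sw do rewrite (flin_sw _ _ lF).
rewrite -/(sw3 D x (fun a c d => F (f a c d))) coass; last first.
  by split; [|split] => y z; apply: flin_comp lF _.
by apply: eq_sw => a b; rewrite (flin_sw _ _ lF).
Qed.

End Coalgebra.

Lemma coalg_morph_sw (K : fieldType) (H H' W : lmodType K) D e D' e' (g : H -> H')
    (f : H' -> H' -> W) x :
  is_coalg_morph D e D' e' g -> bilin f ->
  sw (D' (g x)) f = sw (D x) (fun a b => f (g a) (g b)).
Proof.
move=> [_ Dg _] [f1 f2]; apply: flin_separate => F lF.
rewrite !(flin_sw _ _ lF) Dg //.
by split=> z; [exact: flin_comp (f1 z) | exact: flin_comp (f2 z)].
Qed.

Section IdentityRotaBaxter.
Variables (K : fieldType) (H : lmodType K) (m : H -> H -> H) (u : H)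
  (D : H -> seq (H * H)) (e : H -> K) (S : H -> H) (arr beta : H -> H -> H).
Hypotheses (Halg : is_algebra m u) (Hco : is_coalgebra D e)
  (Hant : is_antipode m u D e S) (Harr : coalg_bimorph D e arr)
  (Hbeta : conv_inv D e arr beta).

Let mL1 y : lin (fun x => m x y). Proof. by case: Halg => [[]]. Qed.
Let mL2 x : lin (m x). Proof. by case: Halg => [[]]. Qed.
Let aL1 y : lin (fun x => arr x y). Proof. by case: Harr => [[]]. Qed.
Let aL2 x : lin (arr x). Proof. by case: Harr => [[]]. Qed.
Let bL1 y : lin (fun x => beta x y). Proof. by case: Hbeta => [[]]. Qed.
Let bL2 x : lin (beta x). Proof. by case: Hbeta => [[]]. Qed.
Let SL : lin S. Proof. by case: Hant. Qed.

Local Notation Sa := (Sarr D S beta).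
Local Notation bu := (bullet m D arr).
Local Notation lar := (lar m D S arr beta).

Lemma lin_Sarr : lin Sa.
Proof. by apply: (lin_sw_coprod Hco); split=> x; [exact: bL1 | exact: lin_comp]. Qed.

Lemma lin_bulletl v : lin (fun x => bu x v).
Proof. by apply: (lin_sw_coprod Hco); split=> x; [exact: mL1 | exact: lin_comp]. Qed.

Lemma lin_bulletr x : lin (bu x).
Proof. by apply: lin_sw_body => a b; exact: lin_comp. Qed.

Lemma arr_Sarr t : sw (D t) (fun c d => arr c (Sa d)) = S t.
Proof.
case: Hbeta => _ arr_beta _; case: Hco => _ _ _ counitl _.
transitivity (sw3 D t (fun c r s => arr c (beta r (S s)))).
  rewrite (sw3_coassoc Hco); last first.
    split=> x y; [exact: aL1 | exact: lin_comp (aL2 x) (bL1 _) |].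
    exact: lin_comp (aL2 x) (lin_comp (bL2 y) SL).
  by apply: eq_sw => c d; rewrite /Sarr (lin_sw _ _ (aL2 c)).
rewrite -[in RHS](counitl t) (lin_sw _ _ SL); apply: eq_sw => w s.
by rewrite arr_beta (linZ SL).
Qed.

Lemma RB3_id a : sw3 D a (fun a1 a2 a3 => m (arr a1 (Sa a2)) a3) = e a *: u.
Proof.
case: Hant => _ _ <-; apply: eq_sw => p q.
by rewrite -(lin_sw _ _ (mL1 q)) arr_Sarr.
Qed.

Lemma form_lar (phi : H -> H -> K) x y z : flin (fun w => phi w z) ->
  phi (lar x y) z =
  sw (D x) (fun c d => sw (D y) (fun c' d' => phi (bu (bu (Sa (arr c c')) d) d') z)).
Proof.
move=> lphi; rewrite /lar (flin_sw _ _ lphi).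
by apply: eq_sw => c d; rewrite (flin_sw _ _ lphi).
Qed.

Hypothesis Hlar : forall phi, form2 phi -> forall x y,
  sw (D x) (fun x1 x2 => sw (D y) (fun y1 y2 => phi (arr x1 y1) (lar x2 y2))) =
  sw (D x) (fun x1 x2 => sw (D y) (fun y1 y2 => phi (arr x2 y2) (lar x1 y1))).

Lemma RB2_id (phi : H -> H -> K) : form2 phi -> forall a b,
  sw3 D a (fun a1 a2 a3 => sw3 D b (fun b1 b2 b3 =>
    phi (bu (bu (Sa (arr a1 b1)) a2) b2) (arr a3 b3))) =
  sw3 D a (fun a1 a2 a3 => sw3 D b (fun b1 b2 b3 =>
    phi (bu (bu (Sa (arr a2 b2)) a3) b3) (arr a1 b1))).
Proof.
(* The left side is the left side of (Hlar) for the flipped form directly;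
   the right side matches its right side after coassociativity in a and b. *)
move=> [p1 p2] a b; case: Hco => _ _ coass _ _.
transitivity (sw (D a) (fun x1 x2 => sw (D b) (fun y1 y2 => phi (lar x1 y1) (arr x2 y2)))).
  rewrite /sw3; apply: eq_sw => p q.
  by under [RHS]eq_sw do rewrite (form_lar _ _ (p1 _)); rewrite exchange_sw.
rewrite -(Hlar (phi := fun v w => phi w v)) //.
have lin_inner c d : lin (fun z => bu (bu (Sa z) c) d).
  exact: lin_comp (lin_bulletl _) (lin_comp (lin_bulletl _) lin_Sarr).
symmetry; rewrite coass; last first.
  split; [|split] => y z; do 2!apply: flin_sw_body => ? ? /=.
  - exact: flin_comp (p2 _) (aL1 _).
  - exact: flin_comp (p1 _) (lin_comp (lin_inner _ _) (aL1 _)).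
  - exact: flin_comp (p1 _) (lin_comp (lin_bulletl _) (lin_bulletr _)).
apply: eq_sw => p q; under [RHS]eq_sw do rewrite (form_lar _ _ (p1 _)).
rewrite exchange_sw; apply: eq_sw => c d; rewrite coass //.
split; [|split] => y z.
- exact: flin_comp (p2 _) (aL2 _).
- exact: flin_comp (p1 _) (lin_comp (lin_inner _ _) (aL2 _)).
- exact: flin_comp (p1 _) (lin_bulletr _).
Qed.

End IdentityRotaBaxter.

Lemma alg_morph_bullet (K : fieldType) (H H' : lmodType K)
    (m : H -> H -> H) (u : H) (D : H -> seq (H * H)) (e : H -> K) (arr : H -> H -> H)
    (m' : H' -> H' -> H') (u' : H') (D' : H' -> seq (H' * H')) (e' : H' -> K)
    (arr' : H' -> H' -> H') (g : H -> H') :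
  bilin m' -> bilin arr' ->
  is_alg_morph m u m' u' g -> is_coalg_morph D e D' e' g ->
  (forall x y, g (arr x y) = arr' (g x) (g y)) ->
  is_alg_morph (bullet m D arr) u (bullet m' D' arr') u' g.
Proof.
move=> [m'L1 m'L2] [a'L1 _] [gL gm gu] gco garr.
split=> // x y; rewrite /bullet (lin_sw _ _ gL) (coalg_morph_sw _ gco).
  by apply: eq_sw => a b; rewrite gm garr.
by split=> [z|z]; [exact: m'L1 | exact: lin_comp (m'L2 z) (a'L1 _)].
Qed.

Theorem proposition4 (K : fieldType) (X : ydph K) :
  is_ydrrb (sub_mul X) (yone X) (ycop X) (ycounit X) (sub_S X)
           (ymul X) (yone X) (ycop X) (ycounit X) (yarr X) (fun x : ycar X => x)
  /\
  (forall (Y : ydph K) (g : ycar X -> ycar Y), is_ydph_morph X Y g ->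
     is_ydrrb_morph
       (sub_mul X) (yone X) (ycop X) (ycounit X)
       (ymul X) (yone X) (ycop X) (ycounit X) (yarr X) (fun x : ycar X => x)
       (sub_mul Y) (yone Y) (ycop Y) (ycounit Y)
       (ymul Y) (yone Y) (ycop Y) (ycounit Y) (yarr Y) (fun y : ycar Y => y)
       g g).
Proof.
have [Halg [Hco [Hant [Harr [_ [_ [Hbeta [_ [_ [_ Hlar]]]]]]]]]] := yaxioms _ X.
split.
  split=> [|//||]; first by split.
    by move=> phi phi2; exact: (RB2_id Halg Hco Hant Harr Hbeta Hlar phi2).
  by exists id => //; exact: RB3_id.
move=> Y g [galg gco garr]; have [[mY _ _ _] [_ [_ [[arrY _ _] _]]]] := yaxioms _ Y.
by split=> //; split=> //; exact: (alg_morph_bullet mY arrY galg gco garr).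
Qed.
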